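(* For $n\ge 1$ let $G_n$ be the number of domino tilings of $C_4\times P_n$. Then for all $n\ge 1$ $$G_n=\frac16\Big[(2+\sqrt3)^{n+1}+(2-\sqrt3)^{n+1}\Big]+\frac13(-1)^n,$$ and for all $n\ge1$ we have $G_{2n}=A_n^2$ and $G_{2n-1}=2B_n^2$, where $$A_n=\frac16\Big[(3+\sqrt3)(2+\sqrt3)^n+(3-\sqrt3)(2-\sqrt3)^n\Big],\qquad B_n=\frac{1}{2\sqrt3}\Big[(2+\sqrt3)^n-(2-\sqrt3)^n\Big].$$
   Context: For graphs $H,K$, $H\times K$ denotes the Cartesian product. $P_n$ is the path on $n$ vertices and $C_4$ is the cycle on $4$ vertices. A domino tiling of a finite graph means a perfect matching of it, so the number of domino tilings of a graph is its number of perfect matchings. Equivalently, $A_n$ and $B_n$ are the integer sequences with $A_1=3$, $A_2=11$, $A_n=4A_{n-1}-A_{n-2}$, and $B_1=1$, $B_2=4$, $B_n=4B_{n-1}-B_{n-2}$ for $n\ge3$. *)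

From HB Require Import structures.
From mathcomp Require Import all_boot all_order all_algebra.
Set Implicit Arguments. Unset Strict Implicit. Unset Printing Implicit Defensive.
Import Order.TTheory GRing.Theory Num.Theory.

Definition CPvert (n : nat) : finType := ('I_4 * 'I_n)%type.

Definition C4adj (i i' : 'I_4) : bool :=
  ((i.+1 %% 4) == i') || ((i'.+1 %% 4) == i).

Definition Padj (n : nat) (j j' : 'I_n) : bool := (j.+1 == j') || (j'.+1 == j).

Definition CPadj (n : nat) (x y : CPvert n) : bool :=
  ((x.2 == y.2) && C4adj x.1 y.1) || ((x.1 == y.1) && Padj x.2 y.2).

Definition is_edge (n : nat) (e : {set CPvert n}) : bool :=
  [exists x, exists y, CPadj x y && (e == [set x; y])].

Definition perfect_matching (n : nat) (M : {set {set CPvert n}}) : bool :=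
  [forall e in M, is_edge e] &&
  [forall v : CPvert n, #|[set e in M | v \in e]| == 1%N].

Definition G (n : nat) : nat := #|[set M : {set {set CPvert n}} | perfect_matching M]|.

Local Open Scope ring_scope.

Definition Acl (R : rcfType) (n : nat) : R :=
  (1 / 6%:R) * ((3%:R + Num.sqrt 3%:R) * (2%:R + Num.sqrt 3%:R) ^+ n
               + (3%:R - Num.sqrt 3%:R) * (2%:R - Num.sqrt 3%:R) ^+ n).

Definition Bcl (R : rcfType) (n : nat) : R :=
  (1 / (2%:R * Num.sqrt 3%:R)) * ((2%:R + Num.sqrt 3%:R) ^+ n - (2%:R - Num.sqrt 3%:R) ^+ n).

(* Cut C_4 x P_n into its n columns (copies of C_4).  A tiling restricted to
   the columns k, k+1, ... is a "partial tiling" in which the vertices of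
   column k already covered from the left form a 4-bit state S; [tails k S]
   counts them, and G n = tails 0 0.  Splitting off the edges inside column k
   (a mask W of cycle edges) and the edges towards column k+1 (a mask T of
   path edges) is a bijection, which gives the transfer recursion
   tails k S = sum_{T,W} [column_ok S W T] * tails (k+1) T.
   The transfer operator maps the 3-dimensional space of "profiles"
   a*[S = 0] + c*[S is two adjacent rows] + f*[S = 15] into itself, via
   (a, c, f) |-> (2a + 4c + f, a + c, a) (checked by computation on the 16
   states).  Hence G n is the first coordinate [ladder n] of the n-th iterate
   from (1, 0, 0), which satisfies G(m+3) + G m = 3 G(m+2) + 3 G(m+1).  The
   closed form in 2 +- sqrt 3 and -1 satisfies the same recurrence and initial
   values; the identities G_{2n} = A_n^2, G_{2n-1} = 2 B_n^2 are field
   computations using (2 + sqrt 3)(2 - sqrt 3) = 1. *)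

From HB Require Import structures.
From mathcomp Require Import all_boot all_order all_algebra.
From mathcomp Require Import zify ring.
Set Implicit Arguments. Unset Strict Implicit. Unset Printing Implicit Defensive.

(* Bit i of the binary expansion of S; masks S < 16 encode subsets of the
   four rows of C_4. *)
Definition bitn (S i : nat) : bool := odd (S %/ 2 ^ i).

Definition mask_of (b : nat -> bool) : nat := b 0 + 2 * b 1 + 4 * b 2 + 8 * b 3.

Lemma bitn_mask_of b i : i < 4 -> bitn (mask_of b) i = b i.
Proof.
rewrite /mask_of /bitn; case: i => [|[|[|[|i]]]] // _;
by case: (b 0); case: (b 1); case: (b 2); case: (b 3).
Qed.

Lemma mask_of_lt b : mask_of b < 16.
Proof. by rewrite /mask_of; case: (b 0); case: (b 1); case: (b 2); case: (b 3). Qed.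

Lemma eq_mask_of b b' : (forall i, i < 4 -> b i = b' i) -> mask_of b = mask_of b'.
Proof. by move=> eq_b; rewrite /mask_of !eq_b. Qed.

Lemma mask_of_bitn (W : 'I_16) : mask_of (bitn W) = W.
Proof.
case: W => m /= lt_m16.
have : all (fun m => mask_of (bitn m) == m) (iota 0 16) by vm_compute.
by move/allP/(_ m); rewrite mem_iota /= => /(_ lt_m16)/eqP.
Qed.

Lemma bitn0 i : bitn 0 i = false.
Proof. by rewrite /bitn div0n. Qed.

(* Local condition at a column with incoming state S, cycle edges W (bit i is
   the edge between rows i and i+1) and outgoing path edges T: every vertex
   not yet covered is covered exactly once, covered vertices are untouched. *)
Definition column_ok (S W T : nat) : bool :=
  all (fun i => bitn W i + bitn W ((i + 3) %% 4) + bitn T i == ~~ bitn S i) (iota 0 4).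

Lemma column_okP S W T :
  reflect (forall i : 'I_4, bitn W i + bitn W (ord_pred i) + bitn T i = ~~ bitn S i)
          (column_ok S W T).
Proof.
have pred_val (i : 'I_4) : val (ord_pred i) = (i + 3) %% 4 by rewrite /= addnS.
apply: (iffP allP) => [ok i | ok i].
- by rewrite pred_val; apply/eqP/ok; rewrite mem_iota /=.
- by rewrite mem_iota /= => lt_i4; have := ok (Ordinal lt_i4); rewrite pred_val => ->.
Qed.

Lemma ordS4_neq (i : 'I_4) : ordS i != i.
Proof. by case: i => [[|[|[|[|]]]] //]. Qed.

Lemma ordSS4_neq (i : 'I_4) : ordS (ordS i) != i.
Proof. by case: i => [[|[|[|[|]]]] //]. Qed.

Lemma ordS_eq (i i' : 'I_4) : (ordS i == i') = (i == ord_pred i').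
Proof. by rewrite -(inj_eq (@ord_pred_inj 4)) ordSK. Qed.

Lemma card_in_bij (T1 T2 : finType) (A : {set T1}) (B : {set T2})
    (f : T1 -> T2) (g : T2 -> T1) :
  {in A, forall x, f x \in B} -> {in B, forall y, g y \in A} ->
  {in A, cancel f g} -> {in B, cancel g f} -> #|A| = #|B|.
Proof.
move=> fAB gBA fK gK; apply/eqP; rewrite eqn_leq; apply/andP; split.
- rewrite -(card_in_imset (can_in_inj fK)); apply: subset_leq_card.
  by apply/subsetP => _ /imsetP [x x_A ->]; apply: fAB.
- rewrite -(card_in_imset (can_in_inj gK)); apply: subset_leq_card.
  by apply/subsetP => _ /imsetP [y y_B ->]; apply: gBA.
Qed.

Lemma card_set_sum (T : finType) (P : pred T) : #|[set x | P x]| = \sum_x P x.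
Proof. by rewrite -sum1_card big_mkcond; apply: eq_bigr => x _; rewrite inE; case: (P x). Qed.

Lemma card_pred1 (T : finType) (b : pred T) (a : T) :
  #|[set i | b i && (i == a)]| = b a.
Proof.
have -> : [set i | b i && (i == a)] = if b a then [set a] else set0.
  by case b_a: (b a); apply/setP => i; rewrite !inE;
    have [->|] := eqVneq i a; rewrite ?b_a ?andbT ?andbF.
by case: (b a); rewrite ?cards1 ?cards0.
Qed.

Lemma card_pred2 (T : finType) (b : pred T) (a c : T) : a != c ->
  #|[set i | b i && ((i == a) || (i == c))]| = b a + b c.
Proof.
move=> ne_ac.
have -> : [set i | b i && ((i == a) || (i == c))] =
          [set i | b i && (i == a)] :|: [set i | b i && (i == c)].
  by apply/setP => i; rewrite !inE andb_orr.
rewrite cardsU !card_pred1 -[RHS]subn0; congr (_ - _); apply/eqP; rewrite cards_eq0.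
apply/eqP/setP => i; rewrite !inE; apply/negbTE/andP => [[/andP [_ /eqP ->]]] /andP [_].
by rewrite (negbTE ne_ac).
Qed.

Section Tilings.
Variable n : nat.
Local Notation V := (CPvert n).

Definition deg (M : {set {set V}}) (v : V) : nat := #|[set e in M | v \in e]|.

Definition in_cols (k : nat) (e : {set V}) : bool := [forall x in e, k <= x.2].

(* M is a tiling of the columns >= k in which the vertices (i, k) with i in
   the state S are left uncovered (they are covered from column k - 1). *)
Definition partial_tiling (k S : nat) (M : {set {set V}}) : bool :=
  [forall e in M, is_edge e && in_cols k e] &&
  [forall v : V, (k <= v.2) ==> (deg M v == ~~ ((v.2 == k :> nat) && bitn S v.1))].

Definition tails (k S : nat) : nat := #|[set M | partial_tiling k S M]|.

Lemma partial_tilingP k S (M : {set {set V}}) :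
  reflect ((forall e, e \in M -> is_edge e /\ in_cols k e) /\
           (forall v : V, k <= v.2 -> deg M v = ~~ ((v.2 == k :> nat) && bitn S v.1)))
          (partial_tiling k S M).
Proof.
apply: (iffP andP) => [[/forall_inP edges /forallP degs] | [edges degs]]; split.
- by move=> e /edges /andP.
- by move=> v k_le; apply/eqP; move/implyP: (degs v); apply.
- by apply/forall_inP => e /edges [-> ->].
- by apply/forallP => v; apply/implyP => /degs ->.
Qed.

Lemma in_cols2 k (x y : V) : in_cols k [set x; y] = (k <= x.2) && (k <= y.2).
Proof.
apply/forall_inP/andP => [in_k | [le_x le_y] z]; last by rewrite !inE => /orP [] /eqP ->.
by split; apply: in_k; rewrite !inE eqxx ?orbT.
Qed.

Lemma in_colsS k e : in_cols k.+1 e -> in_cols k e.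
Proof. by move/forall_inP => in_k; apply/forall_inP => x /in_k /ltnW. Qed.

Lemma deg_setU (A B : {set {set V}}) v :
  [disjoint A & B] -> deg (A :|: B) v = deg A v + deg B v.
Proof.
move=> dis_AB; rewrite /deg -cardsUI.
have -> : [set e in A :|: B | v \in e] = [set e in A | v \in e] :|: [set e in B | v \in e].
  by apply/setP => e; rewrite !inE andb_orl.
suff -> : [set e in A | v \in e] :&: [set e in B | v \in e] = set0 by rewrite cards0 addn0.
apply/setP => e; rewrite !inE; apply/negbTE/andP => [[/andP [e_A _] /andP [e_B _]]].
by rewrite (disjointFr dis_AB e_A) in e_B.
Qed.

Lemma deg_imset (I : finType) (edge : I -> {set V}) (P : pred I) v :
  injective edge -> deg [set edge i | i in P] v = #|[set i | P i && (v \in edge i)]|.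
Proof.
move=> edge_inj; rewrite /deg -[RHS](card_imset _ edge_inj); apply: eq_card => e.
rewrite inE; apply/andP/imsetP => [[/imsetP [i i_P ->] v_e] | [i]].
- by exists i => //; rewrite inE v_e andbT.
- by rewrite inE => /andP [i_P v_e] ->; split; first exact: imset_f.
Qed.

Lemma deg_in_cols (M : {set {set V}}) k (v : V) :
  {in M, forall e, in_cols k.+1 e} -> v.2 = k :> nat -> deg M v = 0.
Proof.
move=> in_k v_k; apply/eqP; rewrite cards_eq0; apply/eqP/setP => e; rewrite !inE.
apply/negbTE/andP => [[e_M v_e]].
by move/forall_inP: (in_k e e_M) => /(_ v v_e); rewrite v_k ltnn.
Qed.

Lemma tails_end S : tails n S = 1.
Proof.
rewrite /tails -(cards1 (set0 : {set {set V}})); apply: eq_card => M; rewrite !inE.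
apply/idP/eqP => [/partial_tilingP [edges _] | ->]; last first.
  by apply/partial_tilingP; split=> [e | v]; rewrite ?inE // leqNgt ltn_ord.
apply/setP => e; rewrite inE; apply/negbTE/negP => /edges [].
case/existsP => x /existsP [y /andP [_ /eqP ->]] /forall_inP /(_ x).
by rewrite !inE eqxx leqNgt ltn_ord => /(_ isT).
Qed.

Lemma G_tails : G n = tails 0 0.
Proof.
rewrite /G /tails; apply: eq_card => M; rewrite !inE; congr (_ && _).
- apply/forall_inP/forall_inP => edges e /edges; last by case/andP.
  by move=> ->; apply/forall_inP.
- by apply/forallP/forallP => degs v; move: (degs v); rewrite bitn0 andbF.
Qed.

Lemma CPadj_sym (x y : V) : CPadj x y = CPadj y x.
Proof.
rewrite /CPadj /C4adj /Padj (eq_sym x.1) (eq_sym x.2).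
by rewrite (orbC (x.1.+1 %% 4 == _)) (orbC (x.2.+1 == _)).
Qed.

Section Column.
Variable j : 'I_n.
Local Notation k := (nat_of_ord j).

(* The column after j (or j itself if j is the last column). *)
Definition next_col : 'I_n := insubd j k.+1.

Lemma next_col_val : k.+1 < n -> val next_col = k.+1.
Proof. by move=> lt_kn; rewrite val_insubd lt_kn. Qed.

Lemma next_col_eq (y : 'I_n) : k < y -> (y == next_col) = (y == k.+1 :> nat).
Proof.
move=> lt_ky; case: (ltnP k.+1 n) => [lt_kn | le_nk].
  by rewrite -(inj_eq val_inj) /= next_col_val.
have -> : next_col = j by apply: val_inj; rewrite val_insubd ltnNge le_nk.
rewrite -(inj_eq val_inj) /= (gtn_eqF lt_ky) ltn_eqF //.
exact: leq_trans (ltn_ord y) le_nk.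
Qed.

Definition cycle_edge (i : 'I_4) : {set V} := [set ((i, j) : V); ((ordS i, j) : V)].
Definition path_edge (i : 'I_4) : {set V} := [set ((i, j) : V); ((i, next_col) : V)].

Lemma cycle_edgeE (v : V) i :
  (v \in cycle_edge i) = (v.2 == j) && ((v.1 == i) || (v.1 == ordS i)).
Proof.
by rewrite !inE; case: v => a b /=; rewrite !xpair_eqE; case: (b == j); rewrite ?andbT ?andbF.
Qed.

Lemma path_edgeE (v : V) i : (v \in path_edge i) = (v.1 == i) && ((v.2 == j) || (v.2 == next_col)).
Proof.
by rewrite !inE; case: v => a b /=; rewrite !xpair_eqE; case: (a == i); rewrite ?andbT ?andbF.
Qed.

Lemma cycle_edge_inj : injective cycle_edge.
Proof.
move=> i i' eq_ii'.
have : ((i, j) : V) \in cycle_edge i' by rewrite -eq_ii' !inE eqxx.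
have : ((ordS i, j) : V) \in cycle_edge i' by rewrite -eq_ii' !inE eqxx orbT.
rewrite !cycle_edgeE /= eqxx /= => /orP [/eqP Si_i' | /eqP/ordS_inj -> //].
case/orP => /eqP // i_Si'.
by move: (ordSS4_neq i'); rewrite -i_Si' Si_i' eqxx.
Qed.

Lemma path_edge_inj : injective path_edge.
Proof.
move=> i i' eq_ii'.
have : ((i, j) : V) \in path_edge i' by rewrite -eq_ii' !inE eqxx.
by rewrite path_edgeE /= eqxx andbT => /eqP.
Qed.

Lemma cycle_path_edge_neq i i' : cycle_edge i != path_edge i'.
Proof.
apply/eqP => eq_ii'.
have : ((i, j) : V) \in path_edge i' by rewrite -eq_ii' !inE eqxx.
have : ((ordS i, j) : V) \in path_edge i' by rewrite -eq_ii' !inE eqxx orbT.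
rewrite !path_edgeE /= eqxx /= !andbT => /eqP <- /eqP Si_i.
by move: (ordS4_neq i); rewrite -Si_i eqxx.
Qed.

Lemma cycle_edge_cols i : ~~ in_cols k.+1 (cycle_edge i).
Proof. by rewrite in_cols2 /= ltnn. Qed.

Lemma path_edge_cols i : ~~ in_cols k.+1 (path_edge i).
Proof. by rewrite in_cols2 /= ltnn. Qed.

Lemma adj_from_column (x y : V) : CPadj x y -> x.2 = j -> k <= y.2 ->
  [\/ y = (ordS x.1, j), y = (ord_pred x.1, j) | k.+1 < n /\ y = (x.1, next_col)].
Proof.
move=> xy x_j le_ky; move: xy; rewrite /CPadj /C4adj /Padj x_j.
case/orP => /andP [/eqP same /orP [] /eqP adj].
- apply: Or31; case: y same adj {le_ky} => y1 y2 /= <- adj.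
  by congr pair; apply: val_inj; rewrite /= adj.
- apply: Or32; case: y same adj {le_ky} => y1 y2 /= <- adj.
  congr pair; rewrite -[y1]ordSK; congr ord_pred; exact: val_inj.
- have lt_kn : k.+1 < n by rewrite adj ltn_ord.
  apply: Or33; split=> //; case: y same adj {le_ky} => y1 y2 /= <- adj.
  by congr pair; apply: val_inj; rewrite next_col_val.
- by move: le_ky; rewrite -adj ltnn.
Qed.

Lemma edge_cases e : is_edge e -> in_cols k e ->
  [\/ in_cols k.+1 e, exists i, e = cycle_edge i | k.+1 < n /\ exists i, e = path_edge i].
Proof.
case/existsP => x /existsP [y /andP [xy /eqP ->]]; rewrite in_cols2 => /andP [le_kx le_ky].
have at_column (a b : V) : CPadj a b -> a.2 = j -> k <= b.2 ->
    [\/ in_cols k.+1 [set a; b], exists i, [set a; b] = cycle_edge i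
      | k.+1 < n /\ exists i, [set a; b] = path_edge i].
  move=> ab a_j le_kb; have a_eq : a = (a.1, j) by rewrite -a_j -surjective_pairing.
  case: (adj_from_column ab a_j le_kb) => [b_eq | b_eq | [lt_kn b_eq]].
  - by apply: Or32; exists a.1; rewrite /cycle_edge -b_eq -a_eq.
  - by apply: Or32; exists b.1; rewrite /cycle_edge b_eq /= ord_predK -a_eq setUC.
  - by apply: Or33; split=> //; exists a.1; rewrite /path_edge -b_eq -a_eq.
have column_or_right (z : V) : k <= z.2 -> z.2 = j \/ k < z.2.
  by rewrite leq_eqVlt => /orP [/eqP/esym z_k | ->]; [left; apply: val_inj | right].
case: (column_or_right x le_kx) => [x_j | lt_kx]; first exact: at_column.
case: (column_or_right y le_ky) => [y_j | lt_ky]; last by apply: Or31; rewrite in_cols2 lt_kx.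
by rewrite setUC; apply: at_column; rewrite // CPadj_sym.
Qed.

Definition cycle_edges (W : nat) : {set {set V}} :=
  [set cycle_edge i | i in [pred i : 'I_4 | bitn W i]].
Definition path_edges (T : nat) : {set {set V}} :=
  [set path_edge i | i in [pred i : 'I_4 | bitn T i]].

Lemma deg_cycle_edges W v :
  deg (cycle_edges W) v = (v.2 == j) * (bitn W v.1 + bitn W (ord_pred v.1)).
Proof.
rewrite deg_imset; last exact: cycle_edge_inj.
have [v_j | v_nj] := eqVneq v.2 j; last first.
  apply/eqP; rewrite mul0n cards_eq0; apply/eqP/setP => i.
  by rewrite in_set cycle_edgeE (negbTE v_nj) andbF inE.
rewrite [nat_of_bool true]/= mul1n -(@card_pred2 _ (fun i : 'I_4 => bitn W i)); last first.
  by rewrite -ordS_eq ordS4_neq.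
apply: eq_card => i; rewrite in_set cycle_edgeE v_j eqxx !inE /=.
by rewrite (eq_sym v.1 (ordS i)) ordS_eq (eq_sym v.1).
Qed.

Lemma deg_path_edges T v :
  deg (path_edges T) v = ((v.2 == j) || (v.2 == next_col)) * bitn T v.1.
Proof.
rewrite deg_imset; last exact: path_edge_inj.
case col: ((v.2 == j) || (v.2 == next_col)); rewrite [nat_of_bool _]/= (mul1n, mul0n).
- rewrite -(@card_pred1 _ (fun i : 'I_4 => bitn T i)).
  by apply: eq_card => i; rewrite in_set path_edgeE col !inE andbT (eq_sym v.1).
- apply/eqP; rewrite cards_eq0; apply/eqP/setP => i.
  by rewrite in_set path_edgeE col !andbF inE.
Qed.

Local Notation triple := ('I_16 * 'I_16 * {set {set V}})%type.

Definition glue (x : triple) : {set {set V}} :=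
  x.2 :|: cycle_edges x.1.1 :|: path_edges x.1.2.

Definition cycle_mask (M : {set {set V}}) : 'I_16 :=
  inord (mask_of (fun i => cycle_edge (inord i) \in M)).
Definition path_mask (M : {set {set V}}) : 'I_16 :=
  inord (mask_of (fun i => path_edge (inord i) \in M)).
Definition beyond (M : {set {set V}}) : {set {set V}} := [set e in M | in_cols k.+1 e].
Definition split_col (M : {set {set V}}) : triple := (cycle_mask M, path_mask M, beyond M).

Definition split_set (S : nat) : {set triple} :=
  [set x : triple | [&& column_ok S x.1.1 x.1.2, (x.1.2 == 0 :> nat) || (k.+1 < n)
                      & partial_tiling k.+1 x.1.2 x.2]].

Lemma bitn_cycle_mask M (i : 'I_4) : bitn (cycle_mask M) i = (cycle_edge i \in M).
Proof. by rewrite /cycle_mask inordK ?mask_of_lt // bitn_mask_of ?inord_val. Qed.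

Lemma bitn_path_mask M (i : 'I_4) : bitn (path_mask M) i = (path_edge i \in M).
Proof. by rewrite /path_mask inordK ?mask_of_lt // bitn_mask_of ?inord_val. Qed.

Lemma deg_glue (x : triple) v : {in x.2, forall e, in_cols k.+1 e} ->
  deg (glue x) v = deg x.2 v + (v.2 == j) * (bitn x.1.1 v.1 + bitn x.1.1 (ord_pred v.1))
                   + ((v.2 == j) || (v.2 == next_col)) * bitn x.1.2 v.1.
Proof.
move=> beyond_x; rewrite /glue !deg_setU ?deg_cycle_edges ?deg_path_edges //.
all: rewrite -setI_eq0; apply/eqP/setP => e; rewrite !inE; apply/negbTE.
- apply/andP => [[e_x /imsetP [i _ e_eq]]].
  by move: (beyond_x e e_x); rewrite e_eq (negbTE (cycle_edge_cols i)).
- apply/andP => [[/orP [e_x | /imsetP [i _ ->]] /imsetP [i' _ e_eq]]].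
  + by move: (beyond_x e e_x); rewrite e_eq (negbTE (path_edge_cols i')).
  + by move: (cycle_path_edge_neq i i'); rewrite e_eq eqxx.
Qed.

Lemma glue_split S M : partial_tiling k S M -> glue (split_col M) = M.
Proof.
case/partial_tilingP => edges _; apply/setP => e; rewrite /glue !inE /=.
apply/idP/idP => [|e_M].
- case/orP => [/orP [/andP [] // | /imsetP [i i_W ->]] | /imsetP [i i_T ->]].
  + by move: i_W; rewrite inE bitn_cycle_mask.
  + by move: i_T; rewrite inE bitn_path_mask.
- have [is_e cols_e] := edges e e_M.
  rewrite /cycle_edges /path_edges.
  case: (edge_cases is_e cols_e) => [beyond_e | [i e_eq] | [_ [i e_eq]]].
  + by rewrite e_M beyond_e.
  + by rewrite e_eq (mem_imset _ _ cycle_edge_inj) inE bitn_cycle_mask -e_eq e_M orbT.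
  + by rewrite e_eq (mem_imset _ _ path_edge_inj) inE bitn_path_mask -e_eq e_M orbT.
Qed.

Lemma path_edge_last S M i :
  ~~ (k.+1 < n) -> partial_tiling k S M -> path_edge i \notin M.
Proof.
move=> last_col /partial_tilingP [edges _]; apply/negP => /edges [is_e cols_e].
case: (edge_cases is_e cols_e) => [beyond_e | [i' eq_i'] | [lt_kn _]].
- by rewrite (negbTE (path_edge_cols i)) in beyond_e.
- by move: (cycle_path_edge_neq i' i); rewrite eq_i' eqxx.
- by rewrite lt_kn in last_col.
Qed.

Lemma split_col_in S M : partial_tiling k S M -> split_col M \in split_set S.
Proof.
move=> tilM; have beyond_cols : {in beyond M, forall e, in_cols k.+1 e}.
  by move=> e; rewrite inE => /andP [].
have degM v := @deg_glue (split_col M) v beyond_cols; rewrite (glue_split tilM) in degM.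
have [edges degs] := partial_tilingP _ _ _ tilM.
rewrite inE /=; apply/and3P; split.
- apply/column_okP => i; have := degs (i, j) (leqnn _).
  by rewrite degM (deg_in_cols beyond_cols) //= !eqxx /= => <-; rewrite add0n !mul1n.
- apply/orP; case: (ltnP k.+1 n) => [lt_kn | le_nk]; [by right | left].
  rewrite /path_mask inordK ?mask_of_lt // /mask_of.
  by rewrite !(negbTE (path_edge_last _ _ tilM)) // -ltnNge.
- apply/partial_tilingP; split=> [e | v lt_kv].
  + by rewrite inE => /andP [/edges [-> _] ->].
  + have := degs v (ltnW lt_kv); rewrite degM /= (gtn_eqF lt_kv) next_col_eq //.
    have -> : (v.2 == j) = false by apply/negbTE; apply: contraTneq lt_kv => ->; rewrite ltnn.
    rewrite mul0n addn0; case: (v.2 == k.+1 :> nat); case: bitn => /=; lia.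
Qed.

Lemma glue_in S x : x \in split_set S -> partial_tiling k S (glue x).
Proof.
case: x => [[W T] M']; rewrite inE /= => /and3P [ok T_ok /partial_tilingP [edges degs]].
have beyond_M' : {in M', forall e, in_cols k.+1 e} by move=> e /edges [].
apply/partial_tilingP; split=> [e | v le_kv].
- rewrite /glue !inE /= => /orP [/orP [/edges [-> /in_colsS] // | /imsetP [i _ ->]] | /imsetP [i i_T ->]].
  + split; last by rewrite in_cols2 /= leqnn.
    apply/existsP; exists (i, j); apply/existsP; exists (ordS i, j).
    by rewrite eqxx andbT /CPadj /C4adj /= !eqxx.
  + have lt_kn : k.+1 < n by case/orP: T_ok => // /eqP T0; move: i_T; rewrite inE T0 bitn0.
    split; last by rewrite in_cols2 /= leqnn next_col_val // leqnSn.
    apply/existsP; exists (i, j); apply/existsP; exists (i, next_col).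
    by rewrite eqxx andbT /CPadj /Padj /= !eqxx /= next_col_val // eqxx orbT.
- rewrite (@deg_glue (W, T, M') v beyond_M'); have [v_j | v_nj] := eqVneq v.2 j.
  + move/column_okP: ok => /(_ v.1) ok_v.
    by rewrite (deg_in_cols beyond_M') ?v_j // eqxx /= -ok_v add0n !mul1n.
  + have lt_kv : k < v.2 by rewrite ltn_neqAle le_kv andbT; apply: contra v_nj => /eqP/val_inj ->.
    rewrite /= mul0n addn0 next_col_eq // degs // (gtn_eqF lt_kv).
    by case: (v.2 == k.+1 :> nat); case: bitn.
Qed.

Lemma split_glue S x : x \in split_set S -> split_col (glue x) = x.
Proof.
case: x => [[W T] M']; rewrite inE /= => /and3P [_ _ /partial_tilingP [edges _]].
have beyond_M' e : e \in M' -> in_cols k.+1 e by case/edges.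
congr (_, _, _).
- apply: ord_inj; rewrite /cycle_mask inordK ?mask_of_lt // -[RHS]mask_of_bitn; apply: eq_mask_of => i lt_i4.
  rewrite /glue !inE /= (mem_imset _ _ cycle_edge_inj) inE inordK //.
  have -> : (cycle_edge (inord i) \in M') = false.
    by apply/negP => /beyond_M'; rewrite (negbTE (cycle_edge_cols _)).
  have -> : (cycle_edge (inord i) \in path_edges T) = false.
    by apply/negP => /imsetP [i' _ e]; move: (cycle_path_edge_neq (inord i) i'); rewrite e eqxx.
  by rewrite orbF.
- apply: ord_inj; rewrite /path_mask inordK ?mask_of_lt // -[RHS]mask_of_bitn; apply: eq_mask_of => i lt_i4.
  rewrite /glue !inE /= (mem_imset _ _ path_edge_inj) inE inordK //.
  have -> : (path_edge (inord i) \in M') = false.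
    by apply/negP => /beyond_M'; rewrite (negbTE (path_edge_cols _)).
  have -> : (path_edge (inord i) \in cycle_edges W) = false.
    by apply/negP => /imsetP [i' _ e]; move: (cycle_path_edge_neq i' (inord i)); rewrite e eqxx.
  by rewrite orbF.
- apply/setP => e; rewrite /beyond /glue !inE /=; apply/idP/idP => [|e_M'].
  + case/andP => /orP [/orP [// | /imsetP [i _ ->]] | /imsetP [i _ ->]].
    * by rewrite (negbTE (cycle_edge_cols i)).
    * by rewrite (negbTE (path_edge_cols i)).
  + by rewrite e_M' beyond_M'.
Qed.

Lemma tails_step S : tails k S =
  \sum_(T < 16) \sum_(W < 16) (column_ok S W T && ((T == 0 :> nat) || (k.+1 < n))) * tails k.+1 T.
Proof.
rewrite /tails (@card_in_bij _ _ _ (split_set S) split_col glue); first last.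
- by move=> x; apply: split_glue.
- by move=> M; rewrite inE => /glue_split.
- by move=> x /glue_in; rewrite inE.
- by move=> M; rewrite inE => /split_col_in.
rewrite card_set_sum.
rewrite -(pair_big xpredT xpredT (fun (WT : 'I_16 * 'I_16) (M' : {set {set V}}) =>
  ([&& column_ok S WT.1 WT.2, (WT.2 == 0 :> nat) || (k.+1 < n) & partial_tiling k.+1 WT.2 M'] : nat))) /=.
rewrite -(pair_big xpredT xpredT (fun W T : 'I_16 => \sum_(M' : {set {set V}})
  ([&& column_ok S W T, (T == 0 :> nat) || (k.+1 < n) & partial_tiling k.+1 T M'] : nat))) /=.
rewrite exchange_big /=; apply: eq_bigr => T _; apply: eq_bigr => W _.
case: (column_ok S W T); case: (_ || _) => /=; first by rewrite mul1n /tails card_set_sum.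
all: by rewrite mul0n big1.
Qed.

End Column.

(* [tails] extended past the last column by the boundary condition that no
   vertex beyond the ladder may be covered. *)
Definition tails_ext (k S : nat) : nat := if k < n then tails k S else (S == 0).

End Tilings.

Definition transfer (g : nat -> nat) (S : nat) : nat :=
  \sum_(0 <= T < 16) \sum_(0 <= W < 16) column_ok S W T * g T.

Lemma tails_ext_step n k S : k < n -> tails_ext n k S = transfer (tails_ext n k.+1) S.
Proof.
move=> lt_kn; rewrite /tails_ext lt_kn (tails_step (Ordinal lt_kn)) /transfer big_mkord.
apply: eq_bigr => T _; rewrite big_mkord; apply: eq_bigr => W _ /=.
case: (ltnP k.+1 n) => [lt_Skn | le_nSk]; first by rewrite orbT andbT.
have -> : k.+1 = n by apply/eqP; rewrite eqn_leq le_nSk lt_kn.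
by rewrite tails_end orbF muln1; case: (column_ok _ _ _); case: (T == 0 :> nat).
Qed.

Definition adjacent_pair (S : nat) : bool := S \in [:: 3; 6; 12; 9].

(* Functions of the state that only depend on whether it is empty, two
   adjacent rows, or full; [profile_step] is the transfer operator on them. *)
Definition profile (t : nat * nat * nat) (S : nat) : nat :=
  t.1.1 * (S == 0) + t.1.2 * adjacent_pair S + t.2 * (S == 15).

Definition profile_step (t : nat * nat * nat) : nat * nat * nat :=
  (2 * t.1.1 + 4 * t.1.2 + t.2, t.1.1 + t.1.2, t.1.1).

Lemma transfer_lin a b c g h l S :
  transfer (fun T => a * g T + b * h T + c * l T) S
  = a * transfer g S + b * transfer h S + c * transfer l S.
Proof.
rewrite /transfer !big_distrr -!big_split /=; apply: eq_bigr => T _.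
rewrite !big_distrr -!big_split /=; apply: eq_bigr => W _; ring.
Qed.

Lemma transfer_profile_basis :
  all (fun S => all (fun t => transfer (profile t) S == profile (profile_step t) S)
                    [:: (1, 0, 0); (0, 1, 0); (0, 0, 1)]) (iota 0 16).
Proof. by rewrite /transfer unlock; vm_compute. Qed.

Lemma transfer_profile t S : S < 16 -> transfer (profile t) S = profile (profile_step t) S.
Proof.
move=> lt_S16; case: t => [[a c] f].
have /allP/(_ S) := transfer_profile_basis; rewrite mem_iota /= => /(_ lt_S16).
case/and4P => /eqP e1 /eqP e2 /eqP e3 _.
transitivity (transfer (fun T => a * profile (1, 0, 0) T + c * profile (0, 1, 0) T
                                 + f * profile (0, 0, 1) T) S).
  by apply: eq_bigr => T _; apply: eq_bigr => W _; rewrite /profile /=; ring.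
by rewrite transfer_lin e1 e2 e3 /profile /=; ring.
Qed.

(* The profile of the counts m columns before the end of the ladder. *)
Definition ladder_profile (m : nat) : nat * nat * nat := iter m profile_step (1, 0, 0).

Lemma tails_ext_profile n m S : m <= n -> S < 16 ->
  tails_ext n (n - m) S = profile (ladder_profile m) S.
Proof.
elim: m S => [|m IHm] S le_mn lt_S16.
  by rewrite subn0 /tails_ext ltnn /profile /= mul1n !mul0n !addn0.
rewrite tails_ext_step; last by rewrite subnS prednK ?leq_subr // subn_gt0.
rewrite -subSn // subSS /ladder_profile iterS -transfer_profile //.
apply: eq_big_nat => T /andP [_ lt_T16]; apply: eq_bigr => W _.
by rewrite IHm // ltnW.
Qed.

Definition ladder (m : nat) : nat := (ladder_profile m).1.1.

Lemma G_ladder n : G n = ladder n.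
Proof.
have := tails_ext_profile (leqnn n) (isT : 0 < 16).
rewrite subnn /tails_ext /profile /ladder /= muln1 !muln0 !addn0 => <-.
by rewrite G_tails; case: n => [|n]; rewrite ?tails_end.
Qed.

(* The three-term recurrence for G, with characteristic polynomial
   (x + 1)(x^2 - 4x + 1). *)
Lemma ladder_rec m : ladder m.+3 + ladder m = 3 * ladder m.+2 + 3 * ladder m.+1.
Proof. by rewrite /ladder /ladder_profile !iterS; case: (iter m _ _) => [[a c] f] /=; lia. Qed.

Import Order.TTheory GRing.Theory Num.Theory.
Local Open Scope ring_scope.

Lemma rec3_unique (V : zmodType) (u v : nat -> V) :
  (forall m, u m.+3 + u m = u m.+2 *+ 3 + u m.+1 *+ 3) ->
  (forall m, v m.+3 + v m = v m.+2 *+ 3 + v m.+1 *+ 3) ->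
  u 0%N = v 0%N -> u 1%N = v 1%N -> u 2%N = v 2%N -> u =1 v.
Proof.
move=> rec_u rec_v e0 e1 e2 m.
suff : [/\ u m = v m, u m.+1 = v m.+1 & u m.+2 = v m.+2] by case.
elim: m => [|m [em em1 em2]]; first by split.
split=> //; apply: (addIr (u m)).
by rewrite rec_u em rec_v em1 em2.
Qed.

Lemma ladder_nat_rec (R : ringType) m :
  ((ladder m.+3)%:R + (ladder m)%:R = (ladder m.+2)%:R *+ 3 + (ladder m.+1)%:R *+ 3 :> R).
Proof. by rewrite -natrD ladder_rec natrD !natrM !mulr_natl. Qed.

Section ClosedForm.
Variable R : rcfType.
Let s : R := Num.sqrt 3%:R.
Let al : R := 2%:R + s.
Let be : R := 2%:R - s.

Lemma sqrt3_sq : s ^+ 2 = 3%:R.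
Proof. by rewrite /s sqr_sqrtr // ler0n. Qed.

Lemma al_be : al * be = 1.
Proof. have s2 := sqrt3_sq; rewrite /al /be; ring: s2. Qed.

Definition closed_form (m : nat) : R :=
  (1 / 6%:R) * (al ^+ m.+1 + be ^+ m.+1) + (1 / 3%:R) * (-1) ^+ m.

(* The closed form satisfies the recurrence, as 2 +- sqrt 3 are the roots of
   x^2 - 4x + 1. *)
Lemma closed_form_rec m :
  closed_form m.+3 + closed_form m = closed_form m.+2 *+ 3 + closed_form m.+1 *+ 3.
Proof.
have s2 := sqrt3_sq.
rewrite -[closed_form m.+2 *+ 3]mulr_natl -[closed_form m.+1 *+ 3]mulr_natl /closed_form !exprS.
have al2 : al * al = 4%:R * al - 1 by rewrite /al; ring: s2.
have be2 : be * be = 4%:R * be - 1 by rewrite /be; ring: s2.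
set x := al ^+ m; set y := be ^+ m; set z := (-1 : R) ^+ m.
ring: al2 be2.
Qed.

Lemma ladder_closed_form m : (ladder m)%:R = closed_form m.
Proof.
have s2 := sqrt3_sq; have n6 : (6%:R : R) != 0 by rewrite pnatr_eq0.
have scaled k : closed_form k * 6%:R = al ^+ k.+1 + be ^+ k.+1 + 2%:R * (-1) ^+ k.
  by rewrite /closed_form; field.
apply: (@rec3_unique _ (fun k => (ladder k)%:R) closed_form) => [k | k | | |].
- exact: ladder_nat_rec.
- exact: closed_form_rec.
all: apply: (mulIf n6); rewrite scaled /ladder /al /be /= !exprS !expr0; ring: s2.
Qed.

Lemma Acl_sq n : Acl R n ^+ 2 = closed_form (2 * n).
Proof.
have s2 := sqrt3_sq.
have ab : al ^+ n * be ^+ n = 1 by rewrite -exprMn al_be expr1n.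
have sgn : (-1 : R) ^+ n * (-1) ^+ n = 1 by rewrite -exprMn mulrNN mulr1 expr1n.
rewrite /al /be in ab; rewrite /Acl -/s /closed_form /al /be mul2n -addnn !exprS !exprD.
by field: s2 ab sgn; rewrite ?mulf_neq0 ?pnatr_eq0.
Qed.

Lemma Bcl_sq n : (0 < n)%N -> 2%:R * Bcl R n ^+ 2 = closed_form (2 * n - 1).
Proof.
case: n => // n _; have s2 := sqrt3_sq.
have ab : al ^+ n * be ^+ n = 1 by rewrite -exprMn al_be expr1n.
have sgn : (-1 : R) ^+ n * (-1) ^+ n = 1 by rewrite -exprMn mulrNN mulr1 expr1n.
have s_neq0 : s != 0.
  by apply/eqP => s0; move: s2; rewrite s0 expr0n /= => /eqP; rewrite eq_sym pnatr_eq0.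
have -> : (2 * n.+1 - 1 = (n + n).+1)%N by lia.
rewrite /al /be in ab; rewrite /Bcl -/s /closed_form /al /be !exprS !exprD.
by field: s2 ab sgn; rewrite ?mulf_neq0 ?pnatr_eq0.
Qed.

End ClosedForm.

Theorem theorem3 (R : rcfType) :
  (forall n : nat, (0 < n)%N ->
     (G n)%:R = (1 / 6%:R) * ((2%:R + Num.sqrt 3%:R) ^+ n.+1 + (2%:R - Num.sqrt 3%:R) ^+ n.+1)
                + (1 / 3%:R) * (-1) ^+ n :> R) /\
  (forall n : nat, (0 < n)%N -> (G (2 * n))%:R = (Acl R n) ^+ 2) /\
  (forall n : nat, (0 < n)%N -> (G (2 * n - 1))%:R = 2%:R * (Bcl R n) ^+ 2).
Proof.
have G_closed n : (G n)%:R = closed_form R n by rewrite G_ladder ladder_closed_form.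
split; [|split] => n n_gt0.
- exact: G_closed.
- by rewrite G_closed Acl_sq.
- by rewrite G_closed Bcl_sq.
Qed.
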